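(* Let $(A,B,s,t,\Delta)$ be a left multiplier bialgebroid, and let $I^s\subseteq B$ be the linear span of all $\phi(a)$ with $a\in A$ and $\phi\colon A\to B$ linear satisfying $\phi(s(x)a)=x\phi(a)$ for all $x\in B,a\in A$, and $I^t\subseteq B$ the linear span of all $\psi(a)$ with $a\in A$ and $\psi\colon A\to B$ linear satisfying $\psi(t(x)a)=\psi(a)x$ for all $x,a$. If $s(I^t)A=A=t(I^s)A$, then $I^t=I^tI^s=I^s$ and this is an idempotent, essential two-sided ideal in $B$.
   Context: All algebras are associative complex algebras, not necessarily unital. For an algebra $A$ with $A_A$ non-degenerate, $L(A)$ denotes right $A$-module endomorphisms of $A$ (containing $A$ via left multiplication) and $M(A)=\{T\in L(A):aT\in A\ \forall a\}$. A left multiplier bialgebroid is a tuple $(A,B,s,t,\Delta)$: (i) $A,B$ algebras, $A_A$ non-degenerate and idempotent; (ii) $s\colon B\to M(A)$ homomorphism, $t\colon B\to M(A)$ anti-homomorphism with commuting images, $s,t$ injective, $s(B)A=A=t(B)A$; ${}_BA\otimes A^B$, the quotient of $A\otimes A$ by the span of $s(x)a\otimes b-a\otimes t(x)b$, is non-degenerate as a right module over $A\otimes1$ and $1\otimes A$; (iii) $\Delta$ is an algebra homomorphism into the algebra of endomorphisms $T$ of ${}_BA\otimes A^B$ for which $T(a\otimes1),T(1\otimes b)\in{}_BA\otimes A^B$ exist with $T(a\otimes b)=T(a\otimes1)(1\otimes b)=T(1\otimes b)(a\otimes1)$; (iv) $\Delta(s(x)t(y)as(x')t(y'))=(t(y)\otimes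 s(x))\Delta(a)(t(y')\otimes s(x'))$; (v) if $\Delta(b)(1\otimes c)=\sum p_i\otimes q_i$ and $\Delta(b)(a\otimes1)=\sum u_j\otimes v_j$ then $\sum\Delta(p_i)(a\otimes1)\otimes q_i=\sum u_j\otimes\Delta(v_j)(1\otimes c)$ in $A^{\otimes3}$ modulo the span of $s(x)a\otimes b\otimes c-a\otimes t(x)b\otimes c$ and $a\otimes s(x)b\otimes c-a\otimes b\otimes t(x)c$. A two-sided ideal $I$ of $B$ is essential if $xI=0$ or $Ix=0$ implies $x=0$; idempotent means $II=I$. *)

From HB Require Import structures.
From mathcomp Require Import all_boot all_order all_algebra.
From mathcomp Require Export reals complex.
Set Implicit Arguments. Unset Strict Implicit. Unset Printing Implicit Defensive.
Import GRing.Theory.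
Local Open Scope ring_scope.

Notation CC R := (R[i])%C.

Section Generic.
Variables (K : fieldType) (A : lmodType K).

Definition seteq (P Q : A -> Prop) := forall v, P v <-> Q v.
Definition setall : A -> Prop := fun _ => True.

Definition lspan (P : A -> Prop) : A -> Prop :=
  fun v => exists (n : nat) (c : 'I_n -> K) (w : 'I_n -> A),
    (forall i, P (w i)) /\ v = \sum_(i < n) c i *: w i.

Definition is_linear (W : lmodType K) (f : A -> W) :=
  forall k a b, f (k *: a + b) = k *: f a + f b.

Variable mul : A -> A -> A.

Definition nu_algebra : Prop :=
  [/\ forall a b c, mul a (mul b c) = mul (mul a b) c,
      forall k a b c, mul (k *: a + b) c = k *: mul a c + mul b c
    & forall k a b c, mul c (k *: a + b) = k *: mul c a + mul c b].

Definition prodset (P Q : A -> Prop) : A -> Prop :=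
  lspan (fun v => exists a b, [/\ P a, Q b & v = mul a b]).

Definition right_nondeg := forall a, (forall b, mul a b = 0) -> a = 0.
Definition alg_idempotent := seteq (prodset setall setall) setall.

Definition in_L (T : A -> A) :=
  is_linear T /\ forall a b, T (mul a b) = mul (T a) b.
(* M(A) = { T in L(A) : a T in A for all a } *)
Definition in_M (T : A -> A) :=
  in_L T /\ forall a, exists c, forall b, mul a (T b) = mul c b.

Definition is_subspace (P : A -> Prop) :=
  P 0 /\ forall k u v, P u -> P v -> P (k *: u + v).
Definition two_sided_ideal (P : A -> Prop) :=
  is_subspace P /\ forall x y, P y -> P (mul x y) /\ P (mul y x).
Definition ideal_idempotent (P : A -> Prop) := seteq (prodset P P) P.
Definition ideal_essential (P : A -> Prop) :=
  forall x, ((forall y, P y -> mul x y = 0) \/ (forall y, P y -> mul y x = 0))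
            -> x = 0.
End Generic.

Section Bialgebroid.
Variables (K : fieldType) (A B : lmodType K)
          (mA : A -> A -> A) (mB : B -> B -> B)
          (s t : B -> A -> A).

(* Formal finite sums  sum_i a_i (x) b_i  representing elements of
   _B A (x) A^B;  two formal sums are identified iff every linear functional
   on A (x) A vanishing on the lspan of  s(x)a (x) b - a (x) t(x)b  (i.e. every
   balanced bilinear form) takes the same value on them.  Over a field this is
   exactly equality in the quotient space. *)
Definition tens := seq (A * A).
Definition bilin (f : A -> A -> K) :=
  (forall k a a' b, f (k *: a + a') b = k * f a b + f a' b) /\
  (forall k a b b', f a (k *: b + b') = k * f a b + f a b').
Definition tbalanced (f : A -> A -> K) :=
  forall x a b, f (s x a) b = f a (t x b).
Definition teval (f : A -> A -> K) (xi : tens) := \sum_(p <- xi) f p.1 p.2.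
Definition teq (xi eta : tens) :=
  forall f, bilin f -> tbalanced f -> teval f xi = teval f eta.

Definition tscale (k : K) (xi : tens) : tens := [seq (k *: p.1, p.2) | p <- xi].
Definition tmulr1 (a : A) (xi : tens) : tens := [seq (mA p.1 a, p.2) | p <- xi].
Definition tmul1r (b : A) (xi : tens) : tens := [seq (p.1, mA p.2 b) | p <- xi].
Definition tlmul (S T : A -> A) (xi : tens) : tens := [seq (S p.1, T p.2) | p <- xi].

(* triple tensors  A (x) A (x) A  modulo the lspan of
   s(x)a(x)b(x)c - a(x)t(x)b(x)c  and  a(x)s(x)b(x)c - a(x)b(x)t(x)c *)
Definition tens3 := seq (A * A * A).
Definition trilin (f : A -> A -> A -> K) :=
  [/\ forall k a a' b c, f (k *: a + a') b c = k * f a b c + f a' b c,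
      forall k a b b' c, f a (k *: b + b') c = k * f a b c + f a b' c
    & forall k a b c c', f a b (k *: c + c') = k * f a b c + f a b c'].
Definition tbalanced3 (f : A -> A -> A -> K) :=
  (forall x a b c, f (s x a) b c = f a (t x b) c) /\
  (forall x a b c, f a (s x b) c = f a b (t x c)).
Definition teval3 (f : A -> A -> A -> K) (xi : tens3) :=
  \sum_(p <- xi) f p.1.1 p.1.2 p.2.
Definition teq3 (xi eta : tens3) :=
  forall f, trilin f -> tbalanced3 f -> teval3 f xi = teval3 f eta.

(* Delta(a) is an endomorphism of _B A (x) A^B, given on representatives by
   D a;  D1 a a' represents Delta(a)(a' (x) 1)  and  D2 a b represents
   Delta(a)(1 (x) b). *)
Definition left_multiplier_bialgebroid
    (D : A -> tens -> tens) (D1 D2 : A -> A -> tens) : Prop :=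
  [/\ nu_algebra mA, nu_algebra mB, right_nondeg mA & alg_idempotent mA] /\
  ((forall x, in_M mA (s x)) /\ (forall x, in_M mA (t x))) /\
  ((forall k x y a, s (k *: x + y) a = k *: s x a + s y a) /\
   (forall x y a, s (mB x y) a = s x (s y a))) /\
  ((forall k x y a, t (k *: x + y) a = k *: t x a + t y a) /\
   (forall x y a, t (mB x y) a = t y (t x a))) /\
  (forall x y a, s x (t y a) = t y (s x a)) /\
  ((forall x y, (forall a, s x a = s y a) -> x = y) /\
   (forall x y, (forall a, t x a = t y a) -> x = y)) /\
  (seteq (lspan (fun v => exists x a, v = s x a)) (@setall _ A) /\
   seteq (lspan (fun v => exists x a, v = t x a)) (@setall _ A)) /\
  ((forall xi, (forall a, teq (tmulr1 a xi) [::]) -> teq xi [::]) /\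
   (forall xi, (forall b, teq (tmul1r b xi) [::]) -> teq xi [::])) /\
  ((forall a xi eta, teq xi eta -> teq (D a xi) (D a eta)) /\
   (forall a xi eta, teq (D a (xi ++ eta)) (D a xi ++ D a eta)) /\
   (forall a k xi, teq (D a (tscale k xi)) (tscale k (D a xi)))) /\
  [/\ forall a a' b, teq (D a [:: (a', b)]) (tmul1r b (D1 a a')) /\
                     teq (D a [:: (a', b)]) (tmulr1 a' (D2 a b)),
      forall k a a' xi, teq (D (k *: a + a') xi) (tscale k (D a xi) ++ D a' xi)
    & forall a a' xi, teq (D (mA a a') xi) (D a (D a' xi))] /\
  (* (iv): Delta(s(x)t(y) a s(x')t(y')) = (t(y) (x) s(x)) Delta(a) (t(y') (x) s(x')),
     where c = s(x)t(y) a s(x')t(y') is characterised by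
     c b = (s(x)t(y)a) (s(x')t(y') b) for all b *)
  (forall x y x' y' a c,
      (forall b, mA c b = mA (s x (t y a)) (s x' (t y' b))) ->
      forall xi, teq (D c xi)
                     (tlmul (t y) (s x) (D a (tlmul (t y') (s x') xi)))) /\
  (forall a b c (pq uv : tens),
      teq (D2 b c) pq -> teq (D1 b a) uv ->
      teq3 (flatten [seq [seq (r.1, r.2, p.2) | r <- D1 p.1 a] | p <- pq])
           (flatten [seq [seq (u.1, r.1, r.2) | r <- D2 u.2 c] | u <- uv])).

Definition Is_set : B -> Prop :=
  lspan (fun v => exists (phi : A -> B) a,
          [/\ is_linear phi, forall x a', phi (s x a') = mB x (phi a')
            & v = phi a]).
Definition It_set : B -> Prop :=
  lspan (fun v => exists (psi : A -> B) a,
          [/\ is_linear psi, forall x a', psi (t x a') = mB (psi a') x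
            & v = psi a]).
End Bialgebroid.

From mathcomp Require Import all_boot all_order all_algebra.
From mathcomp Require Import reals complex.
Import GRing.Theory.
Set Implicit Arguments. Unset Strict Implicit.
Local Open Scope ring_scope.

(* Writing a = sum_i s(x_i) a_i with x_i in I^t, a generator phi(a) of I^s
   becomes sum_i x_i phi(a_i), an element of I^t I^s; dually, t(I^s)A = A puts
   every psi(a) in I^t I^s.  As I^t is a right ideal and I^s a left ideal, this
   gives I^t = I^t I^s = I^s.  For essentiality, x I^s = 0 forces
   s(x)A = s(x I^t)A = 0 and I^s x = 0 forces t(x)A = t(I^s x)A = 0, so x = 0
   by injectivity of s and t. *)

Section LinearSpan.
Variables (K : fieldType) (U : lmodType K).

Lemma is_linear0 (W : lmodType K) (f : U -> W) : is_linear f -> f 0 = 0.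
Proof.
move=> f_lin; have := f_lin 1 0 0; rewrite !scale1r addr0 => f0D.
by have := congr1 (fun w => w - f 0) f0D; rewrite addrK subrr.
Qed.

Lemma lspan_in (P : U -> Prop) u : P u -> lspan P u.
Proof.
move=> Pu; exists 1%N, (fun _ => 1), (fun _ => u).
by split=> //; rewrite big_ord1 scale1r.
Qed.

Lemma lspan_subspace (P : U -> Prop) : is_subspace (lspan P).
Proof.
split.
  by exists 0%N, (fun _ => 0), (fun _ => 0); split; [case | rewrite big_ord0].
move=> k _ _ [m [c1 [w1 [Pw1 ->]]]] [n [c2 [w2 [Pw2 ->]]]].
exists (m + n)%N,
  (fun i => match split i with inl j => k * c1 j | inr j => c2 j end),
  (fun i => match split i with inl j => w1 j | inr j => w2 j end).
split; first by move=> i; case: (split i).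
rewrite big_split_ord /= scaler_sumr; congr (_ + _); apply: eq_bigr => i _.
  by rewrite (unsplitK (inl i)) scalerA.
by rewrite (unsplitK (inr i)).
Qed.

Lemma lspan_map_sub (W : lmodType K) (P : U -> Prop) (Q : W -> Prop) f :
  is_linear f -> is_subspace Q -> (forall u, P u -> Q (f u)) ->
  forall u, lspan P u -> Q (f u).
Proof.
move=> f_lin [Q0 QD] PQ _ [n [c [w [Pw ->]]]].
elim: n c w Pw => [|n IHn] c w Pw; first by rewrite big_ord0 (is_linear0 f_lin).
rewrite big_ord_recr /= addrC f_lin; apply: QD; first exact: PQ.
exact: (IHn (c \o widen_ord (leqnSn n)) (w \o widen_ord (leqnSn n)) (fun i => Pw _)).
Qed.

Lemma lspan_min (P Q : U -> Prop) :
  is_subspace Q -> (forall u, P u -> Q u) -> forall u, lspan P u -> Q u.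
Proof. by move=> Qsub PQ; apply: (@lspan_map_sub U P Q id). Qed.

Lemma lspan_full_eq0 (W : lmodType K) (P : U -> Prop) (f : U -> W) :
  is_linear f -> seteq (lspan P) (@setall _ U) ->
  (forall u, P u -> f u = 0) -> forall u, f u = 0.
Proof.
move=> f_lin Pfull fP0 u.
have zero_sub : is_subspace (fun w : W => w = 0).
  by split=> // k _ _ -> ->; rewrite scaler0 addr0.
exact: (lspan_map_sub f_lin zero_sub fP0 (proj2 (Pfull u) I)).
Qed.

Variable mul : U -> U -> U.

Lemma prodset_in (P Q : U -> Prop) a b : P a -> Q b -> prodset mul P Q (mul a b).
Proof. by move=> Pa Qb; apply: lspan_in; exists a, b. Qed.

Lemma prodset_mono (P Q P' Q' : U -> Prop) :
  (forall u, P u -> P' u) -> (forall u, Q u -> Q' u) ->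
  forall u, prodset mul P Q u -> prodset mul P' Q' u.
Proof.
move=> PP' QQ'; apply: lspan_min; first exact: lspan_subspace.
by move=> _ [a [b [Pa Qb ->]]]; apply: prodset_in; [apply: PP' | apply: QQ'].
Qed.

End LinearSpan.

Section BaseIdeals.
Variables (K : fieldType) (A B : lmodType K) (mB : B -> B -> B) (s t : B -> A -> A).

Hypothesis mulBA : forall x y z, mB x (mB y z) = mB (mB x y) z.
Hypothesis mulB_linear : forall x, is_linear (mB x).
Hypothesis mulB_linear_r : forall y, is_linear (mB^~ y).
Hypothesis s_linear : forall x, is_linear (s x).
Hypothesis t_linear : forall x, is_linear (t x).
Hypothesis s_linear_base : forall a, is_linear (s^~ a).
Hypothesis t_linear_base : forall a, is_linear (t^~ a).
Hypothesis s_mul : forall x y a, s (mB x y) a = s x (s y a).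
Hypothesis t_mul : forall x y a, t (mB x y) a = t y (t x a).
Hypothesis s_inj : forall x y, (forall a, s x a = s y a) -> x = y.
Hypothesis t_inj : forall x y, (forall a, t x a = t y a) -> x = y.
Hypothesis s_It_full :
  seteq (lspan (fun v => exists x a, It_set mB t x /\ v = s x a)) (@setall _ A).
Hypothesis t_Is_full :
  seteq (lspan (fun v => exists x a, Is_set mB s x /\ v = t x a)) (@setall _ A).

Local Notation Is := (Is_set mB s).
Local Notation It := (It_set mB t).
Local Notation ItIs := (prodset mB It Is).

Lemma Is_set_mull x y : Is y -> Is (mB x y).
Proof.
move: y; apply: lspan_map_sub (mulB_linear x) (lspan_subspace _) _.
move=> _ [phi [a [phi_lin phi_s ->]]].
by apply: lspan_in; exists phi, (s x a); rewrite phi_s.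
Qed.

Lemma Is_set_mulr x y : Is y -> Is (mB y x).
Proof.
move: y; apply: lspan_map_sub (mulB_linear_r x) (lspan_subspace _) _.
move=> _ [phi [a [phi_lin phi_s ->]]].
apply: lspan_in; exists (fun b => mB (phi b) x), a; split=> //= [k a1 a2|z a'].
  by rewrite phi_lin mulB_linear_r.
by rewrite phi_s mulBA.
Qed.

Lemma It_set_mulr x y : It y -> It (mB y x).
Proof.
move: y; apply: lspan_map_sub (mulB_linear_r x) (lspan_subspace _) _.
move=> _ [psi [a [psi_lin psi_t ->]]].
by apply: lspan_in; exists psi, (t x a); rewrite psi_t.
Qed.

Lemma Is_set_ideal : two_sided_ideal mB Is.
Proof.
split; first exact: lspan_subspace.
by move=> x y Is_y; split; [apply: Is_set_mull | apply: Is_set_mulr].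
Qed.

Lemma prodset_It_Is_sub_It y : ItIs y -> It y.
Proof.
move: y; apply: lspan_min; first exact: lspan_subspace.
by move=> _ [x [z [It_x _ ->]]]; apply: It_set_mulr.
Qed.

Lemma prodset_It_Is_sub_Is y : ItIs y -> Is y.
Proof.
move: y; apply: lspan_min; first exact: lspan_subspace.
by move=> _ [x [z [_ Is_z ->]]]; apply: Is_set_mull.
Qed.

Lemma Is_set_sub_prodset y : Is y -> ItIs y.
Proof.
move: y; apply: lspan_min; first exact: lspan_subspace.
move=> _ [phi [a [phi_lin phi_s ->]]].
apply: lspan_map_sub (phi_lin) (lspan_subspace _) _ a (proj2 (s_It_full a) I).
move=> _ [x [a' [It_x ->]]]; rewrite phi_s.
by apply: prodset_in => //; apply: lspan_in; exists phi, a'.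
Qed.

Lemma It_set_sub_prodset y : It y -> ItIs y.
Proof.
move: y; apply: lspan_min; first exact: lspan_subspace.
move=> _ [psi [a [psi_lin psi_t ->]]].
apply: lspan_map_sub (psi_lin) (lspan_subspace _) _ a (proj2 (t_Is_full a) I).
move=> _ [x [a' [Is_x ->]]]; rewrite psi_t.
by apply: prodset_in => //; apply: lspan_in; exists psi, a'.
Qed.

Lemma It_set_sub_Is y : It y -> Is y.
Proof. by move=> /It_set_sub_prodset /prodset_It_Is_sub_Is. Qed.

Lemma Is_set_idempotent : ideal_idempotent mB Is.
Proof.
move=> y; split.
  apply: lspan_min; first exact: lspan_subspace.
  by move=> _ [x [z [_ Is_z ->]]]; apply: Is_set_mull.
by move=> /Is_set_sub_prodset; apply: prodset_mono => //; apply: It_set_sub_Is.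
Qed.

Lemma left_annihilator_It_eq0 x : (forall y, It y -> mB x y = 0) -> x = 0.
Proof.
have s0 a : s 0 a = 0 by exact: (is_linear0 (s_linear_base a)).
move=> xIt0; apply: s_inj => a; rewrite s0.
apply: (lspan_full_eq0 (s_linear x) s_It_full) => _ [y [a' [It_y ->]]].
by rewrite -s_mul xIt0.
Qed.

Lemma right_annihilator_Is_eq0 x : (forall y, Is y -> mB y x = 0) -> x = 0.
Proof.
have t0 a : t 0 a = 0 by exact: (is_linear0 (t_linear_base a)).
move=> Isx0; apply: t_inj => a; rewrite t0.
apply: (lspan_full_eq0 (t_linear x) t_Is_full) => _ [y [a' [Is_y ->]]].
by rewrite -t_mul Isx0.
Qed.

Lemma Is_set_essential : ideal_essential mB Is.
Proof.
move=> x [xIs0 | Isx0]; last exact: right_annihilator_Is_eq0.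
by apply: left_annihilator_It_eq0 => y /It_set_sub_Is; apply: xIs0.
Qed.

End BaseIdeals.

Theorem lemma3p8 (R : realType) (A B : lmodType (CC R))
    (mA : A -> A -> A) (mB : B -> B -> B) (s t : B -> A -> A)
    (D : A -> tens A -> tens A) (D1 D2 : A -> A -> tens A) :
  left_multiplier_bialgebroid mA mB s t D D1 D2 ->
  seteq (lspan (fun v => exists x a, It_set mB t x /\ v = s x a)) (@setall _ A) ->
  seteq (lspan (fun v => exists x a, Is_set mB s x /\ v = t x a)) (@setall _ A) ->
  [/\ seteq (It_set mB t) (prodset mB (It_set mB t) (Is_set mB s)),
      seteq (prodset mB (It_set mB t) (Is_set mB s)) (Is_set mB s),
      two_sided_ideal mB (Is_set mB s),
      ideal_idempotent mB (Is_set mB s)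
    & ideal_essential mB (Is_set mB s)].
Proof.
move=> [[_ [mulBA mulBDl mulBDr] _ _]
        [[sM tM] [[s_lin s_mul] [[t_lin t_mul] [_ [[s_inj t_inj] _]]]]]] s_full t_full.
have mulB_linear x : is_linear (mB x) by move=> k y z; apply: mulBDr.
have mulB_linear_r y : is_linear (mB^~ y) by move=> k x z; apply: mulBDl.
have s_linear x : is_linear (s x) by case: (sM x) => [[]].
have t_linear x : is_linear (t x) by case: (tM x) => [[]].
have s_linear_base a : is_linear (s^~ a) by move=> k x y; apply: s_lin.
have t_linear_base a : is_linear (t^~ a) by move=> k x y; apply: t_lin.
split.
- move=> y; split; first exact: (It_set_sub_prodset t_full).
  exact: (prodset_It_Is_sub_It mulB_linear_r).
- move=> y; split; first exact: (prodset_It_Is_sub_Is mulB_linear).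
  exact: (Is_set_sub_prodset s_full).
- exact: (Is_set_ideal s mulBA mulB_linear mulB_linear_r).
- exact: (Is_set_idempotent mulB_linear s_full t_full).
- exact: (Is_set_essential mulB_linear s_linear t_linear s_linear_base
           t_linear_base s_mul t_mul s_inj t_inj s_full t_full).
Qed.
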